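(* In the setting described in the context, if Method 2 stops at iteration $k$ (i.e. $x^{k+1}=x^k$), then $x^k\in\operatorname{zer}(A+B)$.
   Context: Let $\mathcal H$ be a real Hilbert space with inner product $\langle\cdot,\cdot\rangle$ and norm $\|\cdot\|$. Let $A_1:\mathcal H\to\mathcal H$ be $\beta$-cocoercive for some $\beta>0$ (i.e. $\langle A_1x-A_1y,x-y\rangle\ge\beta\|A_1x-A_1y\|^2$ for all $x,y$), let $A_2:\mathcal H\to\mathcal H$ be maximally monotone and uniformly continuous, let $B:\mathcal H\rightrightarrows\mathcal H$ be maximally monotone, and set $A:=A_1+A_2$. Assume $\operatorname{zer}(A+B):=\{x:0\in Ax+Bx\}\neq\emptyset$. $J_{\alpha B}:=(I+\alpha B)^{-1}$ for $\alpha>0$, and $P_C$ denotes the orthogonal projection onto a nonempty closed convex set $C$. Fix $\theta,\delta\in(0,1)$, $\bar\delta>0$ with $1-\delta-\bar\delta>0$, and $\alpha_{-1}>0$ with $\alpha_{-1}\le4\beta\bar\delta$. Conceptual Algorithm: pick $x^0\in\mathcal H$. Given $x^k$ and $\alpha_{k-1}$, for $j\in\mathbb N$ let $\bar x^k_j:=J_{\alpha_{k-1}\theta^jB}(x^k-\alpha_{k-1}\theta^jAx^k)$ and let $j(k)$ be the smallest $j\in\mathbb N$ with $\alpha_{k-1}\theta^j\langle A_2x^k-A_2\bar x^k_j,x^k-\bar x^k_j\rangle\le\delta\|x^k-\bar x^k_j\|^2$. Set $\alpha_k:=\alpha_{k-1}\theta^{j(k)}$, $\bar x^k:=J_{\alpha_kB}(x^k-\alpha_kAx^k)$,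 $r_k:=\frac{\bar\delta}{\alpha_k}\|x^k-\bar x^k\|^2$, $T_k:=\{x\in\mathcal H:\langle \frac{x^k-\bar x^k}{\alpha_k}-(A_2x^k-A_2\bar x^k),x-\bar x^k\rangle\le r_k\}$ and $\Gamma_k:=\{x\in\mathcal H:\langle x^0-x^k,x-x^k\rangle\le0\}$. Method 2 sets $x^{k+1}:=P_{T_k\cap\Gamma_k}(x^0)$ and stops if $x^{k+1}=x^k$. *)

From mathcomp Require Import all_boot all_order all_algebra.
From mathcomp Require Import all_classical all_reals all_analysis.
Set Implicit Arguments. Unset Strict Implicit. Unset Printing Implicit Defensive.
Import Order.TTheory GRing.Theory Num.Theory.
Import numFieldNormedType.Exports.
Local Open Scope classical_set_scope.
Local Open Scope ring_scope.

Section Defs.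
Variables (R : realType) (H : normedModType R).

(* [ip] is an inner product on H inducing the norm of H:
   symmetric, linear in the first argument, and <x,x> = ||x||^2
   (positive definiteness follows from the norm identity). *)
Definition is_inner_product (ip : H -> H -> R) : Prop :=
  (forall x y, ip x y = ip y x) /\
  (forall (a : R) x y z, ip (a *: x + y) z = a * ip x z + ip y z) /\
  (forall x, ip x x = `|x| ^+ 2).

Variable ip : H -> H -> R.

(* set-valued operators H =>> H are relations T x u, meaning u \in T x *)
Definition monotone_op (T : H -> set H) : Prop :=
  forall x y u v, T x u -> T y v -> 0 <= ip (u - v) (x - y).

Definition maximally_monotone (T : H -> set H) : Prop :=
  monotone_op T /\
  forall S : H -> set H, monotone_op S ->
    (forall x u, T x u -> S x u) -> forall x u, S x u -> T x u.

Definition op_of (f : H -> H) : H -> set H := fun x => [set f x].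

Definition cocoercive (beta : R) (f : H -> H) : Prop :=
  forall x y, ip (f x - f y) (x - y) >= beta * `|f x - f y| ^+ 2.

(* z = J_{aB}(y) = (I + aB)^{-1} y, i.e. y \in z + a B z *)
Definition is_resolvent (a : R) (B : H -> set H) (y z : H) : Prop :=
  exists u, B z u /\ y = z + a *: u.

Definition is_proj (C : set H) (x p : H) : Prop :=
  C p /\ forall y, C y -> `|x - p| <= `|x - y|.

Definition zer_sum (A : H -> H) (B : H -> set H) : set H :=
  [set x | B x (- A x)].

End Defs.

From mathcomp Require Import all_boot all_order all_algebra.
From mathcomp Require Import all_classical all_reals all_analysis.
From mathcomp Require Import lra.
Set Implicit Arguments. Unset Strict Implicit. Unset Printing Implicit Defensive.
Import Order.TTheory GRing.Theory Num.Theory.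
Import numFieldNormedType.Exports.
Local Open Scope classical_set_scope.
Local Open Scope ring_scope.

(* If the method stops, then
   x^k = x^{k+1} lies in the half-space T_k, i.e. with d = x^k - xbar^k and
   w = A_2 x^k - A_2 xbar^k,
     ||d||^2 - alpha_k <w, d> <= deltab ||d||^2,
   while the line search gives alpha_k <w, d> <= delta ||d||^2.  Adding,
   (1 - delta - deltab) ||d||^2 <= 0, so xbar^k = x^k: x^k is a fixed point
   of J_{alpha_k B}(I - alpha_k A), i.e. a zero of A + B. *)

Section InnerProduct.
Variables (R : realType) (H : normedModType R) (ip : H -> H -> R).
Hypothesis ip_inner : is_inner_product ip.

Lemma ip_scaleBl (a : R) (u w z : H) : ip (a *: u - w) z = a * ip u z - ip w z.
Proof.
have [_ [ip_linear _]] := ip_inner.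
have ip0l : ip 0 z = 0.
  by have := ip_linear 1 0 0 z; rewrite scaler0 addr0; lra.
have ipNl : ip (- w) z = - ip w z.
  by have := ip_linear (-1) w 0 z; rewrite addr0 scaleN1r ip0l addr0 mulN1r.
by rewrite ip_linear ipNl.
Qed.

Lemma halfspace_line_search_eq0 (a delta deltab : R) (d w : H) :
  0 < a -> 0 < 1 - delta - deltab ->
  ip (a^-1 *: d - w) d <= deltab / a * `|d| ^+ 2 ->
  a * ip w d <= delta * `|d| ^+ 2 -> d = 0.
Proof.
move=> a_gt0 gap_gt0 in_halfspace line_search.
have [_ [_ ip_norm]] := ip_inner.
have scaled : `|d| ^+ 2 - a * ip w d <= deltab * `|d| ^+ 2.
  move: in_halfspace; rewrite ip_scaleBl ip_norm -(ler_pM2l a_gt0).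
  by rewrite mulrBr mulVKf ?gt_eqF // mulrA [a * (_ / _)]mulrCA mulfV ?gt_eqF // mulr1.
have : (1 - delta - deltab) * `|d| ^+ 2 <= 0 by lra.
rewrite pmulr_rle0 // => d2_le0.
by apply/eqP; rewrite -normr_eq0 -sqrf_eq0 eq_le d2_le0 sqr_ge0.
Qed.
End InnerProduct.

Lemma resolvent_fixpoint_zer_sum (R : realType) (H : normedModType R)
    (A : H -> H) (B : H -> set H) (a : R) (z : H) :
  a != 0 -> is_resolvent a B (z - a *: A z) z -> zer_sum A B z.
Proof.
move=> a_neq0 [u [Bzu fixpoint]].
have : a *: (u + A z) = 0.
  by rewrite scalerDr -[a *: u](addrI z fixpoint) addNr.
move/eqP; rewrite scaler_eq0 (negPf a_neq0) addr_eq0 => /eqP u_eq.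
by rewrite /zer_sum /= -u_eq.
Qed.

Theorem proposition4p10 (R : realType) (H : completeNormedModType R)
  (ip : H -> H -> R) (A1 A2 : H -> H) (B : H -> set H)
  (beta theta delta deltab alpham1 : R)
  (x : nat -> H) (alpha : nat -> R) (j : nat -> nat) (xb : nat -> nat -> H)
  (k : nat) :
  is_inner_product ip ->
  0 < beta -> cocoercive ip beta A1 ->
  maximally_monotone ip (op_of A2) -> unif_continuous A2 ->
  maximally_monotone ip B ->
  (exists z, zer_sum (fun y => A1 y + A2 y) B z) ->
  0 < theta < 1 -> 0 < delta < 1 -> 0 < deltab -> 0 < 1 - delta - deltab ->
  0 < alpham1 -> alpham1 <= 4 * beta * deltab ->
  let A := fun y => A1 y + A2 y in
  (* alpha_{i-1}, with alpha_{-1} = alpham1 *)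
  let aprev := fun i : nat => if i is i'.+1 then alpha i' else alpham1 in
  (* xb i j' = \bar x^i_{j'} *)
  (forall i j', (i <= k)%N ->
     is_resolvent (aprev i * theta ^+ j') B
       (x i - (aprev i * theta ^+ j') *: A (x i)) (xb i j')) ->
  let cond := fun i j' =>
     aprev i * theta ^+ j' * ip (A2 (x i) - A2 (xb i j')) (x i - xb i j')
       <= delta * `|x i - xb i j'| ^+ 2 in
  (* j i = j(i) is the smallest j' satisfying the line-search condition *)
  (forall i, (i <= k)%N -> cond i (j i) /\ forall j', (j' < j i)%N -> ~ cond i j') ->
  (forall i, (i <= k)%N -> alpha i = aprev i * theta ^+ j i) ->
  let xbar := fun i => xb i (j i) in
  let r := fun i => deltab / alpha i * `|x i - xbar i| ^+ 2 in
  let T := fun i => [set y | ip ((alpha i)^-1 *: (x i - xbar i)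
                                  - (A2 (x i) - A2 (xbar i))) (y - xbar i) <= r i] in
  let Gamma := fun i => [set y | ip (x 0%N - x i) (y - x i) <= 0] in
  (forall i, (i <= k)%N -> is_proj (T i `&` Gamma i) (x 0%N) (x i.+1)) ->
  x k.+1 = x k ->
  zer_sum A B (x k).
Proof.
move=> ip_inner _ _ _ _ _ _ /andP[theta_gt0 _] _ _ gap_gt0 alpham1_gt0 _
  A aprev resolvent cond line_search step_size xbar r T Gamma proj stop.
have alpha_gt0 : forall i, (i <= k)%N -> 0 < alpha i.
  elim=> [|i IH] ile; rewrite step_size // mulr_gt0 ?exprn_gt0 //.
  exact/IH/ltnW.
have alphak_gt0 := alpha_gt0 k (leqnn k).
have [[xk_in_T _] _] := proj k (leqnn k).
rewrite stop in xk_in_T.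
have line_search_k := (line_search k (leqnn k)).1.
rewrite /cond -step_size // in line_search_k.
have xbar_xk : xbar k = x k.
  apply/esym/subr0_eq.
  apply: (halfspace_line_search_eq0 ip_inner alphak_gt0 gap_gt0).
  - exact xk_in_T.
  - exact line_search_k.
apply: (resolvent_fixpoint_zer_sum (lt0r_neq0 alphak_gt0)).
by rewrite -[X in is_resolvent _ _ _ X]xbar_xk step_size //; exact: resolvent.
Qed.
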